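(* Let $Y$ be a discrete random variable taking values in a set $\mathcal{Y}$, and let $B=(B_0,\dots,B_{m-1})$ be a random vector taking values in $\{0,1\}^m$. Assume $\mathbf{H}(Y\mid B)=0$ and that the components of $B$ are independent conditionally on $Y$. For $y_n\in\mathcal{Y}$ with $P(Y=y_n)>0$ define $\varphi^{(n)}\in\{-1,0,1\}^m$ by $\varphi^{(n)}_i=0$ if $P(B_i=1\mid Y=y_n)\in(0,1)$, $\varphi^{(n)}_i=-1$ if $P(B_i=1\mid Y=y_n)=0$, and $\varphi^{(n)}_i=1$ if $P(B_i=1\mid Y=y_n)=1$. Then for any $y_n,y_l\in\mathcal{Y}$ with $P(Y=y_n)>0$, $P(Y=y_l)>0$ and $y_l\neq y_n$, there exists an index $i$ with $\varphi^{(n)}_i=-\varphi^{(l)}_i\neq 0$.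
   Context: $\mathbf{H}(Y\mid B)$ is the conditional Shannon entropy; conditional independence of the components means $P(B=b\mid Y=y)=\prod_i P(B_i=b_i\mid Y=y)$ for all $b$ and all $y$ with $P(Y=y)>0$. *)

From HB Require Import structures.
From mathcomp Require Import all_boot all_order all_algebra.
From mathcomp Require Import all_classical all_reals all_analysis.
Set Implicit Arguments. Unset Strict Implicit. Unset Printing Implicit Defensive.
Import Order.TTheory GRing.Theory Num.Theory.
Local Open Scope classical_set_scope.
Local Open Scope ring_scope.

Section Defs.
Context (d : measure_display) (T : measurableType d) (R : realType)
        (P : probability T R) (Ty : countType) (m : nat)
        (Y : T -> Ty) (B : 'I_m -> T -> bool).

Definition Pr (E : set T) : R := fine (P E).

Definition evY (y : Ty) : set T := [set t | Y t = y].
Definition evB (b : {ffun 'I_m -> bool}) : set T := [set t | forall i, B i t = b i].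
Definition evBi (i : 'I_m) (c : bool) : set T := [set t | B i t = c].

Definition hterm (y : Ty) (b : {ffun 'I_m -> bool}) : R :=
  let j := Pr (evY y `&` evB b) in
  if j == 0 then 0 else j * ln (Pr (evB b) / j).

Definition cond_entropy : \bar R :=
  (\sum_(b : {ffun 'I_m -> bool}) \esum_(y in [set: Ty]) (hterm y b)%:E)%E.

Definition condY (E : set T) (y : Ty) : R := Pr (E `&` evY y) / Pr (evY y).

Definition cond_indep : Prop :=
  forall y, 0 < Pr (evY y) ->
  forall b : {ffun 'I_m -> bool},
    condY (evB b) y = \prod_(i < m) condY (evBi i (b i)) y.

Definition phi (y : Ty) (i : 'I_m) : int :=
  let c := condY (evBi i true) y in
  if c == 0 then (-1)%R else if c == 1 then 1%R else 0%R.

End Defs.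

(* Zero conditional entropy makes Y a function of B: every atom {B = b} of
   positive probability lies, up to a null set, inside a single level set
   {Y = y}.  If no coordinate i had P(B_i = 1 | Y = y_n) and
   P(B_i = 1 | Y = y_l) equal to 0 and 1 (in some order), one could choose,
   coordinate by coordinate, a value b_i that has positive conditional
   probability under both y_n and y_l.  Conditional independence then gives
   P(B = b | Y = y) > 0 for both y, so the atom {B = b} meets both level sets
   with positive probability, forcing y_n = y_l. *)
From HB Require Import structures.
From mathcomp Require Import all_boot all_order all_algebra.
From mathcomp Require Import all_classical all_reals all_analysis.
From mathcomp Require Import lra.
Set Implicit Arguments. Unset Strict Implicit. Unset Printing Implicit Defensive.
Import Order.TTheory GRing.Theory Num.Theory.
Local Open Scope classical_set_scope.
Local Open Scope ring_scope.

Lemma two_point_common_support (R : realFieldType) (p q : bool -> R) :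
    (forall c, 0 <= p c) -> (forall c, 0 <= q c) ->
    p false + p true = 1 -> q false + q true = 1 ->
    ~ (p true = 0 /\ q true = 1) -> ~ (p true = 1 /\ q true = 0) ->
  exists c, 0 < p c /\ 0 < q c.
Proof.
move=> p0 q0 p1 q1 not01 not10; apply/not_existsP => disjoint_supports.
have := disjoint_supports false; have := disjoint_supports true.
have := p0 false; have := p0 true; have := q0 false; have := q0 true; lra.
Qed.

Section Probability.
Context (d : measure_display) (T : measurableType d) (R : realType)
        (P : probability T R).

Lemma PrE (A : set T) : measurable A -> P A = (Pr P A)%:E.
Proof. by move=> mA; rewrite /Pr fineK // fin_num_measure. Qed.

Lemma Pr_ge0 (A : set T) : 0 <= Pr P A.
Proof. exact/fine_ge0/measure_ge0. Qed.

Lemma Pr_le (A C : set T) : measurable A -> measurable C -> A `<=` C ->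
  Pr P A <= Pr P C.
Proof.
move=> mA mC AC; rewrite -lee_fin -!PrE //.
by apply: le_measure => //; rewrite inE.
Qed.

Lemma PrU (A C : set T) : measurable A -> measurable C -> A `&` C = set0 ->
  Pr P (A `|` C) = Pr P A + Pr P C.
Proof.
move=> mA mC AC; apply: EFin_inj; rewrite EFinD -!PrE //; last exact: measurableU.
exact: measureU.
Qed.

End Probability.

Section SignVectors.
Context (d : measure_display) (T : measurableType d) (R : realType)
        (P : probability T R) (Ty : countType) (m : nat)
        (Y : T -> Ty) (B : 'I_m -> T -> bool).
Hypothesis mY : forall y : Ty, measurable (Y @^-1` [set y]).
Hypothesis mB : forall i : 'I_m, measurable (B i @^-1` [set true]).

Local Notation Pr := (Pr P).
Local Notation evY := (evY Y).
Local Notation evB := (evB B).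
Local Notation evBi := (evBi B).
Local Notation condY := (condY P Y).

Lemma measurable_evY y : measurable (evY y).
Proof. exact: mY. Qed.

Lemma evBi_false i : evBi i false = ~` evBi i true.
Proof. by apply/seteqP; split => t; rewrite /evBi /=; case: (B i t). Qed.

Lemma measurable_evBi i c : measurable (evBi i c).
Proof. by case: c; [exact: mB | rewrite evBi_false; exact/measurableC/mB]. Qed.

Lemma evB_bigcap b : evB b = \big[setI/setT]_(i <- enum 'I_m) evBi i (b i).
Proof.
suff evB_seq s : [set t | forall i, i \in s -> B i t = b i] =
                 \big[setI/setT]_(i <- s) evBi i (b i).
  by rewrite -evB_seq; apply/seteqP; split => t /= Bt i //; apply: Bt; rewrite mem_enum.
elim: s => [|a s IHs]; first by rewrite big_nil; apply/seteqP; split.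
rewrite big_cons -IHs; apply/seteqP; split => t /=.
  by move=> Bt; split => [|i si]; apply: Bt; rewrite inE ?eqxx ?si ?orbT.
by move=> [Ba Bt] i; rewrite inE => /orP[/eqP->//|/Bt].
Qed.

Lemma measurable_evB b : measurable (evB b).
Proof.
by rewrite evB_bigcap; apply: bigsetI_measurable => i _; apply: measurable_evBi.
Qed.

Lemma Pr_evYI_le y b : Pr (evY y `&` evB b) <= Pr (evB b).
Proof.
apply: Pr_le; last exact: subIsetr.
  exact/measurableI/measurable_evB/measurable_evY.
exact: measurable_evB.
Qed.

Lemma hterm_ge0 y b : 0 <= hterm P Y B y b.
Proof.
rewrite /hterm; case: eqP => // /eqP j0.
have j_gt0 : 0 < Pr (evY y `&` evB b) by rewrite lt_def j0 Pr_ge0.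
apply: mulr_ge0; first exact: ltW.
by apply: ln_ge0; rewrite ler_pdivlMr // mul1r Pr_evYI_le.
Qed.

Lemma cond_entropy_eq0_hterm :
  cond_entropy P Y B = 0%E -> forall y b, hterm P Y B y b = 0.
Proof.
move=> H0 y b; apply/eqP; rewrite eq_le hterm_ge0 andbT.
suff : ((hterm P Y B y b)%:E <= 0)%E by rewrite lee_fin.
have esum_hterm_ge0 c : (0 <= \esum_(z in [set: Ty]) (hterm P Y B z c)%:E)%E.
  by apply: esum_ge0 => z _; rewrite lee_fin hterm_ge0.
have esum_b0 : (\esum_(z in [set: Ty]) (hterm P Y B z b)%:E = 0)%E.
  apply/eqP; rewrite eq_le esum_hterm_ge0 andbT -H0 /cond_entropy (bigD1 b) //=.
  exact/leeDl/sume_ge0.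
rewrite -esum_b0; apply: esum_ge.
exists [set y]; first by split; [exact: finite_set1 | by []].
by rewrite fsbig_set1.
Qed.

Lemma hterm_eq0_joint y b : hterm P Y B y b = 0 ->
  0 < Pr (evY y `&` evB b) -> Pr (evY y `&` evB b) = Pr (evB b).
Proof.
move=> h0 j_gt0; move: h0; rewrite /hterm gt_eqF // => /eqP.
rewrite mulf_eq0 gt_eqF //= => /eqP ln0.
have ratio_gt0 : 0 < Pr (evB b) / Pr (evY y `&` evB b).
  by rewrite divr_gt0 // (lt_le_trans j_gt0) ?Pr_evYI_le.
have ratio1 : Pr (evB b) / Pr (evY y `&` evB b) = 1.
  by rewrite -(lnK ratio_gt0) ln0 expR0.
by rewrite -[RHS](divfK (lt0r_neq0 j_gt0)) ratio1 mul1r.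
Qed.

Lemma cond_entropy_eq0_functional y y' b : cond_entropy P Y B = 0%E ->
  0 < Pr (evY y `&` evB b) -> 0 < Pr (evY y' `&` evB b) -> y = y'.
Proof.
move=> H0 jy jy'; apply/eqP/negP => yy'.
have mYB z : measurable (evY z `&` evB b).
  exact/measurableI/measurable_evB/measurable_evY.
have disjoint : (evY y `&` evB b) `&` (evY y' `&` evB b) = set0.
  by apply/seteqP; split => t //= [[/= Yt _] [/= Yt' _]]; rewrite -Yt -Yt' eqxx in yy'.
have union_le : Pr ((evY y `&` evB b) `|` (evY y' `&` evB b)) <= Pr (evB b).
  by apply: Pr_le => //; [exact: measurableU | exact: measurable_evB | move=> t [] []].
have ey := hterm_eq0_joint (cond_entropy_eq0_hterm H0 y b) jy.
have ey' := hterm_eq0_joint (cond_entropy_eq0_hterm H0 y' b) jy'.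
move: union_le; rewrite PrU // ey ey' -[leRHS]add0r lerD2r leNgt.
by rewrite -ey jy.
Qed.

Lemma condY_ge0 E y : 0 <= condY E y.
Proof. by rewrite divr_ge0 ?Pr_ge0. Qed.

Lemma condY_evBi_sum i y : 0 < Pr (evY y) ->
  condY (evBi i false) y + condY (evBi i true) y = 1.
Proof.
move=> Py; rewrite /condY -mulrDl -PrU.
- suff -> : evBi i false `&` evY y `|` evBi i true `&` evY y = evY y.
    by rewrite divff ?gt_eqF.
  apply/seteqP; split => t /=; first by case => -[].
  by rewrite /evBi /= => Yt; case: (B i t); [right | left].
- exact/measurableI/measurable_evY/measurable_evBi.
- exact/measurableI/measurable_evY/measurable_evBi.
by apply/seteqP; split => t //= [[Bf _] [Bt _]]; move: Bf; rewrite /evBi /= Bt.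
Qed.

Lemma cond_indep_joint_gt0 y (b : {ffun 'I_m -> bool}) :
    cond_indep P Y B -> 0 < Pr (evY y) -> (forall i, 0 < condY (evBi i (b i)) y) ->
  0 < Pr (evY y `&` evB b).
Proof.
move=> Hind Py pos_i.
have condB_gt0 : 0 < condY (evB b) y by rewrite Hind // prodr_gt0.
by move: (mulr_gt0 condB_gt0 Py); rewrite /condY divfK ?gt_eqF // setIC.
Qed.

Lemma phi_opposite y y' i :
    (condY (evBi i true) y = 0 /\ condY (evBi i true) y' = 1) \/
    (condY (evBi i true) y = 1 /\ condY (evBi i true) y' = 0) ->
  phi P Y B y i = - phi P Y B y' i /\ phi P Y B y i != 0.
Proof.
by rewrite /phi => -[] [-> ->]; rewrite ?eqxx ?oner_eq0 ?opprK ?oppr_eq0 ?oner_eq0.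
Qed.

End SignVectors.

Theorem lemma3 (d : measure_display) (T : measurableType d) (R : realType)
    (P : probability T R) (Ty : countType) (m : nat)
    (Y : T -> Ty) (B : 'I_m -> T -> bool)
    (mY : forall y : Ty, measurable (Y @^-1` [set y]))
    (mB : forall i : 'I_m, measurable (B i @^-1` [set true]))
    (H0 : cond_entropy P Y B = 0%E)
    (Hind : cond_indep P Y B)
    (yn yl : Ty)
    (Pn : 0 < Pr P (evY Y yn)) (Pl : 0 < Pr P (evY Y yl))
    (Hne : yl != yn) :
  exists i : 'I_m, phi P Y B yn i = - phi P Y B yl i /\ phi P Y B yn i != 0.
Proof.
apply/not_existsP => no_opposite.
have common_value i : exists c, 0 < condY P Y (evBi B i c) yn /\
                                0 < condY P Y (evBi B i c) yl.
  apply: two_point_common_support; rewrite ?condY_evBi_sum //.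
  - by move=> c; apply: condY_ge0.
  - by move=> c; apply: condY_ge0.
  - by move=> opp; apply: (no_opposite i); apply: phi_opposite; left.
  - by move=> opp; apply: (no_opposite i); apply: phi_opposite; right.
have [b bP] := fin_all_exists common_value.
have jn : 0 < Pr P (evY Y yn `&` evB B [ffun i => b i]).
  by apply: cond_indep_joint_gt0 => // i; rewrite ffunE; case: (bP i).
have jl : 0 < Pr P (evY Y yl `&` evB B [ffun i => b i]).
  by apply: cond_indep_joint_gt0 => // i; rewrite ffunE; case: (bP i).
by move/eqP: Hne; apply; exact: (cond_entropy_eq0_functional mY mB H0 jl jn).
Qed.
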